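(* Let $\{u_k\}_{k\ge 0}$ be the iterative sequence defined below. Then the sequence is non-decreasing: $u_{k+1}(t,x)\ge u_k(t,x)$ for all $k\ge 0$ and all $(t,x)\in\mathbb{R}^+\times\Omega$.
   Context: Let $\Omega\subset\mathbb{R}$ be a bounded domain symmetric with respect to the origin ($x\in\Omega\Rightarrow -x\in\Omega$). Let $Lu=u_t+Mu$, where $Mu=a(x)u_{xx}+b(x)u_x+c(x)u$ with continuous coefficients, $a>0$ on $\Omega$, $a,c$ even and $b$ odd, so that $L\tilde u=\widetilde{Lu}$ where $\tilde u(t,x):=u(t,-x)$. Let $\psi\in C^2(\mathbb{R}^+\times\Omega)$ and boundary/initial data $g$ satisfy $\psi(t,x)+\psi(t,-x)\le 0$ and $\psi\le g$. Define $u_0$ as the solution of $Lu_0=0$ in $\mathbb{R}^+\times\Omega$, $u_0(0,x)=g(0,x)$ for $x\in\Omega$, $u_0=g$ on $\mathbb{R}^+\times\partial\Omega$. Inductively, $u_{k+1}$ is the (viscosity) solution of the parabolic obstacle problem $\min\big(Lu_{k+1},\,u_{k+1}(t,x)-u_k(t,-x)-\psi(t,x)\big)=0$ in $\mathbb{R}^+\times\Omega$, $u_{k+1}(0,x)=g(0,x)$ in $\Omega$, $u_{k+1}=g$ on $\mathbb{R}^+\times\partial\Omega$. The standard comparison principle for such parabolic obstacle problems (larger obstacle gives larger solution; the solution with obstacle dominates the solution without obstacle, same data) is assumed to hold. *)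

From Stdlib Require Import Reals Lra.
Open Scope R_scope.

Definition Qdom (Omega : R -> Prop) (t x : R) : Prop := 0 < t /\ Omega x.

Definition closure1 (Omega : R -> Prop) (x : R) : Prop :=
  forall eps, 0 < eps -> exists y, Omega y /\ Rabs (y - x) < eps.
Definition bdry1 (Omega : R -> Prop) (x : R) : Prop :=
  closure1 Omega x /\ ~ Omega x.
Definition Qbar (Omega : R -> Prop) (t x : R) : Prop := 0 <= t /\ closure1 Omega x.

Definition cont2_at (P : R -> R -> Prop) (f : R -> R -> R) (t x : R) : Prop :=
  forall eps, 0 < eps -> exists delta, 0 < delta /\
    forall s y, P s y -> Rabs (s - t) < delta -> Rabs (y - x) < delta ->
      Rabs (f s y - f t x) < eps.

Definition cont2_on (P : R -> R -> Prop) (f : R -> R -> R) : Prop :=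
  forall t x, P t x -> cont2_at P f t x.

Definition has_C1_partials (P : R -> R -> Prop) (f ft fx : R -> R -> R) : Prop :=
  forall t x, P t x ->
    derivable_pt_lim (fun s => f s x) t (ft t x) /\
    derivable_pt_lim (fun y => f t y) x (fx t x) /\
    cont2_at P f t x /\ cont2_at P ft t x /\ cont2_at P fx t x.

Definition C1_on (P : R -> R -> Prop) (f : R -> R -> R) : Prop :=
  exists ft fx, has_C1_partials P f ft fx.

Definition C2_on (P : R -> R -> Prop) (f : R -> R -> R) : Prop :=
  exists ft fx, has_C1_partials P f ft fx /\ C1_on P ft /\ C1_on P fx.

Definition is_test_fn (Omega : R -> Prop) (phi phit phix phixx : R -> R -> R) : Prop :=
  forall t x, Qdom Omega t x ->
    derivable_pt_lim (fun s => phi s x) t (phit t x) /\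
    derivable_pt_lim (fun y => phi t y) x (phix t x) /\
    derivable_pt_lim (fun y => phix t y) x (phixx t x) /\
    cont2_at (Qdom Omega) phi t x /\ cont2_at (Qdom Omega) phit t x /\
    cont2_at (Qdom Omega) phix t x /\ cont2_at (Qdom Omega) phixx t x.

Definition loc_max_Q (Omega : R -> Prop) (f : R -> R -> R) (t x : R) : Prop :=
  exists delta, 0 < delta /\ forall s y, Qdom Omega s y ->
    Rabs (s - t) < delta -> Rabs (y - x) < delta -> f s y <= f t x.
Definition loc_min_Q (Omega : R -> Prop) (f : R -> R -> R) (t x : R) : Prop :=
  exists delta, 0 < delta /\ forall s y, Qdom Omega s y ->
    Rabs (s - t) < delta -> Rabs (y - x) < delta -> f t x <= f s y.

(* L phi = phi_t + a phi_xx + b phi_x + c u  (zeroth order term evaluated on u) *)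
Definition Lval (a b c : R -> R) (phit phix phixx u : R -> R -> R) (t x : R) : R :=
  phit t x + a x * phixx t x + b x * phix t x + c x * u t x.

(* Generic (continuous) viscosity solution of  G(t,x,L u) = 0  in Q, with
   u(0,.) = g(0,.) on Omega and u = g on R^+ x boundary(Omega).
   G is nondecreasing in its last argument, as is L in u_xx (a > 0), so
   touching from above gives G >= 0 and touching from below gives G <= 0
   (consistent with classical solutions). *)
Definition visc_sol_gen (Omega : R -> Prop) (a b c : R -> R)
    (G : R -> R -> R -> R) (g u : R -> R -> R) : Prop :=
  cont2_on (Qbar Omega) u /\
  (forall x, Omega x -> u 0 x = g 0 x) /\
  (forall t x, 0 < t -> bdry1 Omega x -> u t x = g t x) /\
  (forall phi phit phix phixx t x, is_test_fn Omega phi phit phix phixx ->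
     Qdom Omega t x -> loc_max_Q Omega (fun s y => u s y - phi s y) t x ->
     0 <= G t x (Lval a b c phit phix phixx u t x)) /\
  (forall phi phit phix phixx t x, is_test_fn Omega phi phit phix phixx ->
     Qdom Omega t x -> loc_min_Q Omega (fun s y => u s y - phi s y) t x ->
     G t x (Lval a b c phit phix phixx u t x) <= 0).

Definition pde_sol (Omega : R -> Prop) (a b c : R -> R) (g u : R -> R -> R) : Prop :=
  visc_sol_gen Omega a b c (fun _ _ l => l) g u.

Definition obs_sol (Omega : R -> Prop) (a b c : R -> R) (h g u : R -> R -> R) : Prop :=
  visc_sol_gen Omega a b c (fun t x l => Rmin l (u t x - h t x)) g u.

(* The standard comparison principle (assumed), for continuous obstacles:
   (i) larger obstacle gives larger solution;
   (ii) the solution with obstacle dominates the solution without obstacle. *)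
Definition comparison_principle (Omega : R -> Prop) (a b c : R -> R)
    (g : R -> R -> R) : Prop :=
  (forall h1 h2 v1 v2, cont2_on (Qdom Omega) h1 -> cont2_on (Qdom Omega) h2 ->
     (forall t x, Qdom Omega t x -> h1 t x <= h2 t x) ->
     obs_sol Omega a b c h1 g v1 -> obs_sol Omega a b c h2 g v2 ->
     forall t x, Qdom Omega t x -> v1 t x <= v2 t x) /\
  (forall h v w, cont2_on (Qdom Omega) h ->
     pde_sol Omega a b c g w -> obs_sol Omega a b c h g v ->
     forall t x, Qdom Omega t x -> w t x <= v t x).

(* The base case is the second half of the comparison
   principle: u_1 solves an obstacle problem with the same data as u_0.
   If u_k <= u_(k+1), then the obstacle of u_(k+1), namely
   u_k(t,-x) + psi(t,x), lies below that of u_(k+2), so the first half of the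
   comparison principle gives u_(k+1) <= u_(k+2).  The only thing to check is
   that these obstacles are continuous on R^+ x Omega, which holds because
   Omega is symmetric and each u_k is continuous up to the boundary. *)
From Stdlib Require Import Reals Lra.
Open Scope R_scope.

Lemma Qbar_of_Qdom (Omega : R -> Prop) (t x : R) :
  Qdom Omega t x -> Qbar Omega t x.
Proof.
  intros [Ht Hx]; split; [lra|].
  intros eps Heps; exists x; split; [exact Hx|].
  rewrite Rminus_diag, Rabs_R0; exact Heps.
Qed.

Lemma Qbar_of_Qdom_opp (Omega : R -> Prop)
    (Omega_sym : forall x, Omega x -> Omega (- x)) (t x : R) :
  Qdom Omega t x -> Qbar Omega t (- x).
Proof. intros [Ht Hx]; apply Qbar_of_Qdom; split; auto. Qed.

Lemma cont2_on_plus (P : R -> R -> Prop) (f g : R -> R -> R) :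
  cont2_on P f -> cont2_on P g -> cont2_on P (fun t x => f t x + g t x).
Proof.
  intros Hf Hg t x Htx eps Heps.
  destruct (Hf t x Htx (eps / 2)) as [d1 [Hd1 H1]]; [lra|].
  destruct (Hg t x Htx (eps / 2)) as [d2 [Hd2 H2]]; [lra|].
  exists (Rmin d1 d2); split; [now apply Rmin_pos|].
  intros s y Hsy Hs Hy.
  pose proof (Rmin_l d1 d2); pose proof (Rmin_r d1 d2).
  assert (Hfs : Rabs (f s y - f t x) < eps / 2) by (apply H1; auto; lra).
  assert (Hgs : Rabs (g s y - g t x) < eps / 2) by (apply H2; auto; lra).
  replace (f s y + g s y - (f t x + g t x))
    with ((f s y - f t x) + (g s y - g t x)) by ring.
  eapply Rle_lt_trans; [apply Rabs_triang|lra].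
Qed.

Lemma cont2_on_comp_opp (P Q : R -> R -> Prop) (f : R -> R -> R) :
  (forall t x, P t x -> Q t (- x)) ->
  cont2_on Q f -> cont2_on P (fun t x => f t (- x)).
Proof.
  intros HPQ Hf t x Htx eps Heps.
  destruct (Hf t (- x) (HPQ t x Htx) eps Heps) as [d [Hd Hfd]].
  exists d; split; [exact Hd|].
  intros s y Hsy Hs Hy; apply Hfd; [now apply HPQ | exact Hs |].
  replace (- y - - x) with (- (y - x)) by ring.
  now rewrite Rabs_Ropp.
Qed.

Lemma C2_on_cont2_on (P : R -> R -> Prop) (f : R -> R -> R) :
  C2_on P f -> cont2_on P f.
Proof.
  intros [ft [fx [Hf _]]] t x Htx.
  now destruct (Hf t x Htx) as [_ [_ [Hcont _]]].
Qed.

Lemma reflected_obstacle_cont (Omega : R -> Prop)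
    (Omega_sym : forall x, Omega x -> Omega (- x)) (v psi : R -> R -> R) :
  cont2_on (Qbar Omega) v -> C2_on (Qdom Omega) psi ->
  cont2_on (Qdom Omega) (fun t x => v t (- x) + psi t x).
Proof.
  intros Hv Hpsi.
  apply (cont2_on_plus (Qdom Omega) (fun t x => v t (- x)) psi).
  - exact (cont2_on_comp_opp _ _ v (Qbar_of_Qdom_opp Omega Omega_sym) Hv).
  - now apply C2_on_cont2_on.
Qed.

Theorem mainTheorem1
  (Omega : R -> Prop)
  (Omega_open : forall x, Omega x -> exists d, 0 < d /\
       forall y, Rabs (y - x) < d -> Omega y)
  (Omega_conn : forall x y z, Omega x -> Omega y -> x <= z <= y -> Omega z)
  (Omega_nonempty : exists x, Omega x)
  (Omega_bdd : exists M, forall x, Omega x -> Rabs x <= M)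
  (Omega_sym : forall x, Omega x -> Omega (- x))
  (a b c : R -> R)
  (a_cont : forall x, Omega x -> continuity_pt a x)
  (b_cont : forall x, Omega x -> continuity_pt b x)
  (c_cont : forall x, Omega x -> continuity_pt c x)
  (a_pos : forall x, Omega x -> 0 < a x)
  (a_even : forall x, a (- x) = a x)
  (c_even : forall x, c (- x) = c x)
  (b_odd : forall x, b (- x) = - b x)
  (psi g : R -> R -> R)
  (psi_C2 : C2_on (Qdom Omega) psi)
  (psi_sym : forall t x, Qdom Omega t x -> psi t x + psi t (- x) <= 0)
  (psi_le_g : forall t x, Qdom Omega t x -> psi t x <= g t x)
  (CP : comparison_principle Omega a b c g)
  (u : nat -> R -> R -> R)
  (u0_sol : pde_sol Omega a b c g (u 0%nat))
  (uS_sol : forall k : nat,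
     obs_sol Omega a b c (fun t x => u k t (- x) + psi t x) g (u (S k))) :
  forall (k : nat) (t x : R), Qdom Omega t x -> u k t x <= u (S k) t x.
Proof.
  destruct CP as [CP_obstacle CP_free].
  assert (obstacle_cont : forall k,
    cont2_on (Qdom Omega) (fun t x => u k t (- x) + psi t x)).
  { intros [|k]; apply reflected_obstacle_cont; auto.
    - exact (proj1 u0_sol).
    - exact (proj1 (uS_sol k)). }
  induction k as [|k IH]; intros t x Htx.
  - exact (CP_free _ _ _ (obstacle_cont 0%nat) u0_sol (uS_sol 0%nat) t x Htx).
  - refine (CP_obstacle _ _ _ _ (obstacle_cont k) (obstacle_cont (S k)) _
      (uS_sol k) (uS_sol (S k)) t x Htx).
    intros s y [Hs Hy]; apply Rplus_le_compat_r, IH; split; auto.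
Qed.
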